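(* Let $M(n,h)=\frac{2n+2-2\lceil 2\sqrt{n+h}\,\rceil}{4}$ and, for $h\ge1$, $m(h)=\min\{n\ge1: M(n,h)\ge h\}$. Then for every $h\ge 1$, $M(m(h),h)=h$. Furthermore, if $0\le \alpha-(m(h)+h)<3$ for some number $\alpha$ of the form $N^2$ or $N(N+1)$ with $N$ a positive integer, then $m(h+1)=m(h)+3$; otherwise $m(h+1)=m(h)+2$.
   Context: Here $M$ and $m$ are purely numerical functions as defined in the claim. *)

From HB Require Import structures.
From mathcomp Require Import all_boot all_order all_algebra.
From mathcomp Require Import reals.
Set Implicit Arguments. Unset Strict Implicit. Unset Printing Implicit Defensive.
Import Order.TTheory GRing.Theory Num.Theory.
Local Open Scope ring_scope.

Definition Mfun (R : realType) (n h : nat) : R :=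
  (2 * n%:R + 2 - 2 * (Num.ceil (2 * Num.sqrt (((n + h)%N)%:R : R)))%:~R) / 4.

Definition is_m (R : realType) (h n : nat) : Prop :=
  (1 <= n)%N /\ h%:R <= Mfun R n h /\
  forall k : nat, (1 <= k)%N -> h%:R <= Mfun R k h -> (n <= k)%N.

Definition near_square_cond (x : nat) : Prop :=
  exists (alpha N : nat), (0 < N)%N /\ (alpha = N ^ 2 \/ alpha = N * N.+1)%N /\
    (x <= alpha)%N /\ (alpha < x + 3)%N.

From HB Require Import structures.
From mathcomp Require Import all_boot all_order all_algebra.
From mathcomp Require Import reals.
From mathcomp Require Import lra zify.

Set Implicit Arguments.
Unset Strict Implicit.
Unset Printing Implicit Defensive.
Import Order.TTheory GRing.Theory Num.Theory.
Local Open Scope ring_scope.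

(* Writing n = 2h + 1 + j, the inequality M(n,h) >= h becomes 12h <= j^2 (and it
   fails for n <= 2h), while M(n,h) = h says moreover that (j + 1)^2 < 4(n + h).
   Hence m(h) = 2h + 1 + k with k = ceil(sqrt(12h)), and the minimality of k
   gives M(m(h),h) = h.  From h to h + 1, k stays put if k^2 >= 12h + 12 and
   otherwise grows by one.  As 4N^2 = (2N)^2 and 4N(N+1) = (2N+1)^2 - 1, the
   near-square condition at x asks for some m >= 2 with 4x <= m^2 < 4x + 12;
   for x = m(h) + h = 3h + 1 + k the only candidate is m = k + 2, which works
   exactly when k^2 < 12h + 12. *)

Section MfunAsCeiling.

Variable R : realType.

Lemma ceil_twice_sqrt_le (s : nat) (z : int) :
  (Num.ceil (2 * Num.sqrt (s%:R : R)) <= z) = (0 <= z) && (4 * s%:Z <= z ^+ 2).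
Proof.
have sqrt_ge0 := sqrtr_ge0 (s%:R : R).
have sqr_sqrt : Num.sqrt (s%:R : R) ^+ 2 = s%:R by rewrite sqr_sqrtr ?ler0n.
rewrite ceil_le_int -(ler0z R) -(ler_int R) rmorphM rmorphXn /= pmulrn.
by apply/idP/andP => [le_z | [z_ge0 le_sz]]; first split; nra.
Qed.

Lemma ceil_twice_sqrt_eq (s : nat) (z : int) : 0 < z ->
  (Num.ceil (2 * Num.sqrt (s%:R : R)) == z) = ((z - 1) ^+ 2 < 4 * s%:Z <= z ^+ 2).
Proof.
move=> z_gt0; have := ceil_twice_sqrt_le s z; have := ceil_twice_sqrt_le s (z - 1).
set c := Num.ceil _ => le_pred le_z.
apply/eqP/andP => [Ec | [lt_pred le_sz]].
  by rewrite Ec lexx in le_z; rewrite Ec in le_pred; split; lia.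
lia.
Qed.

Lemma le_Mfun n h : (h%:R <= Mfun R n h) =
  (Num.ceil (2 * Num.sqrt ((n + h)%N%:R : R)) <= n%:Z + 1 - 2 * h%:Z).
Proof.
rewrite /Mfun ler_pdivlMr // -(ler_int R).
rewrite !rmorphD /= !rmorphN /= !rmorphM /= !pmulrn.
by apply/idP/idP => H; lra.
Qed.

Lemma Mfun_eq n h : (Mfun R n h == h%:R) =
  (Num.ceil (2 * Num.sqrt ((n + h)%N%:R : R)) == n%:Z + 1 - 2 * h%:Z).
Proof.
rewrite /Mfun -(eqr_int R).
rewrite !rmorphD /= !rmorphN /= !rmorphM /= !pmulrn.
by apply/eqP/eqP => H; lra.
Qed.

Lemma Mfun_lt_low n h : (0 < h)%N -> (n <= 2 * h)%N -> Mfun R n h < h%:R.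
Proof.
move=> h_gt0 le_n; rewrite ltNge le_Mfun ceil_twice_sqrt_le.
by apply/negP => /andP[z_ge0 le_z]; nia.
Qed.

Lemma le_Mfun_excess h j : (h%:R <= Mfun R (2 * h + 1 + j) h) = (12 * h <= j ^ 2)%N.
Proof.
rewrite le_Mfun ceil_twice_sqrt_le.
by apply/andP/idP => [[_ le_z] | le_hj]; [|split]; nia.
Qed.

Lemma Mfun_excess_eq h j :
  (Mfun R (2 * h + 1 + j) h == h%:R) = (12 * h <= j ^ 2 < 12 * h + 2 * j + 3)%N.
Proof.
rewrite Mfun_eq ceil_twice_sqrt_eq; last by lia.
by apply/andP/andP => [[lt_z le_z] | [le_hj lt_j]]; split; nia.
Qed.

End MfunAsCeiling.

Definition is_ceil_sqrt (a k : nat) : bool := (k.-1 ^ 2 < a <= k ^ 2)%N.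

Lemma is_ceil_sqrt_leq a k j : is_ceil_sqrt a k -> (a <= j ^ 2)%N -> (k <= j)%N.
Proof.
move=> /andP[lt_a _] le_a; rewrite leqNgt; apply/negP => lt_jk.
have : (j ^ 2 <= k.-1 ^ 2)%N by rewrite leq_sqr -ltnS prednK //; lia.
lia.
Qed.

Lemma exists_ceil_sqrt a : (0 < a)%N -> exists k, is_ceil_sqrt a k.
Proof.
move=> a_gt0; have ex_k : exists k, (a <= k ^ 2)%N by exists a; nia.
case: (ex_minnP ex_k) => k le_a k_min; exists k; apply/andP; split => //.
case: k le_a k_min => [|k] le_a k_min /=; first lia.
by rewrite ltnNge; apply/negP => /k_min; lia.
Qed.

Lemma is_ceil_sqrt_sqr_lt a k : is_ceil_sqrt a k -> (k ^ 2 + 1 < a + 2 * k)%N.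
Proof. by case: k => [|k] /andP[] /=; nia. Qed.

Lemma near_square_condP x :
  near_square_cond x <-> exists2 m, (2 <= m)%N & (4 * x <= m ^ 2 < 4 * x + 12)%N.
Proof.
split.
  move=> [a [N [N_gt0 [[->|->] [le_xa lt_ax]]]]].
    by exists (2 * N)%N; [lia | apply/andP; split; nia].
  by exists (2 * N + 1)%N; [lia | apply/andP; split; nia].
move=> [m m_ge2 /andP[le_xm lt_mx]].
have [N [Em | Em]] : exists N, m = (2 * N)%N \/ m = (2 * N + 1)%N.
  by exists (m %/ 2)%N; lia.
- exists (N ^ 2)%N, N; rewrite Em in m_ge2 le_xm lt_mx.
  by do !split; [lia | left | nia | nia].
- exists (N * N.+1)%N, N; rewrite Em in m_ge2 le_xm lt_mx.
  by do !split; [lia | right | nia | nia].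
Qed.

Section LeastExcess.

Variables h k : nat.
Hypotheses (h_gt0 : (0 < h)%N) (hk : is_ceil_sqrt (12 * h) k).

Let k_ge4 : (4 <= k)%N.
Proof.
move/andP: hk => [_ le_hk]; rewrite leqNgt; apply/negP => lt_k4.
have : (k ^ 2 <= 3 ^ 2)%N by rewrite leq_sqr; lia.
lia.
Qed.

Lemma is_ceil_sqrt_succ : (k ^ 2 < 12 * h.+1)%N -> is_ceil_sqrt (12 * h.+1) k.+1.
Proof.
move=> lt_k; apply/andP; split => //=.
have k_lt := is_ceil_sqrt_sqr_lt hk; move/andP: hk => [_ le_hk].
have [k_le5 | k_gt5] := leqP k 5; last by nia.
have [] : k = 4%N \/ k = 5%N by lia.
all: by move=> Ek; rewrite Ek in le_hk k_lt lt_k *; lia.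
Qed.

Lemma near_square_cond_excess :
  near_square_cond (2 * h + 1 + k + h) <-> (k ^ 2 < 12 * h.+1)%N.
Proof.
apply: (iff_trans (near_square_condP _)).
have k_lt := is_ceil_sqrt_sqr_lt hk; move/andP: hk => [_ le_hk].
split; last by move=> lt_k; exists (k + 2)%N; [lia | apply/andP; split; nia].
move=> [m _ /andP[le_m lt_m]].
have [lt_mk | ge_mk] := ltnP m (k + 2).
  have : (m ^ 2 <= (k + 1) ^ 2)%N by rewrite leq_sqr; lia.
  lia.
have [le_mk | gt_mk] := leqP m (k + 2).
  have Em : m = (k + 2)%N by lia.
  by rewrite Em in lt_m; lia.
have : ((k + 3) ^ 2 <= m ^ 2)%N by rewrite leq_sqr; lia.
lia.
Qed.

End LeastExcess.

Lemma is_m_ceil_sqrt (R : realType) h k : (0 < h)%N -> is_ceil_sqrt (12 * h) k ->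
  is_m R h (2 * h + 1 + k).
Proof.
move=> h_gt0 hk; split; first lia.
split; first by rewrite le_Mfun_excess; case/andP: hk.
move=> n _; have [le_n | lt_n] := leqP n (2 * h).
  by rewrite leNgt Mfun_lt_low.
have -> : n = (2 * h + 1 + (n - (2 * h).+1))%N by lia.
by rewrite le_Mfun_excess => /(is_ceil_sqrt_leq hk); lia.
Qed.

Theorem lemma4 (R : realType) (h : nat) (hh : (1 <= h)%N) :
  exists mh : nat, is_m R h mh /\ Mfun R mh h = h%:R /\
    exists mh1 : nat, is_m R h.+1 mh1 /\
      (near_square_cond (mh + h) -> mh1 = (mh + 3)%N) /\
      (~ near_square_cond (mh + h) -> mh1 = (mh + 2)%N).
Proof.
have [k hk] : exists k, is_ceil_sqrt (12 * h) k by apply: exists_ceil_sqrt; rewrite muln_gt0.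
have k_sqr_lt := is_ceil_sqrt_sqr_lt hk.
exists (2 * h + 1 + k)%N; split; first exact: is_m_ceil_sqrt.
split; first by apply/eqP; rewrite Mfun_excess_eq; case/andP: hk; lia.
have near := near_square_cond_excess hh hk.
have [k_big | k_small] := leqP (12 * h.+1) (k ^ 2).
  exists (2 * h.+1 + 1 + k)%N; split.
    apply: is_m_ceil_sqrt => //; case/andP: hk => lt_k _.
    by apply/andP; split; lia.
  by split; [move/near; lia | lia].
exists (2 * h.+1 + 1 + k.+1)%N; split.
  exact: is_m_ceil_sqrt (is_ceil_sqrt_succ hh hk k_small).
by split; [lia | case; apply/near].
Qed.
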